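(* Let $q$ be a power of an odd prime, $d\ge 1$, and $E\subset\mathbb{F}_q^d$. If $|E|>\frac{q^d-1}{q-1}+1$, then $E$ contains three distinct collinear points. If moreover $d$ is even, then already $|E|>\frac{q^d-1}{q-1}$ implies that $E$ contains three distinct collinear points.
   Context: A line in $\mathbb{F}_q^d$ is a set $\{u+rv: r\in\mathbb{F}_q\}$ with $u,v\in\mathbb{F}_q^d$, $v\neq0$; points are collinear if they lie on a common line. *)

From HB Require Import structures.
From mathcomp Require Import all_boot all_order all_algebra all_field.
Set Implicit Arguments. Unset Strict Implicit. Unset Printing Implicit Defensive.
Import GRing.Theory.
Local Open Scope ring_scope.

Definition collinear (F : finFieldType) (d : nat) (x y z : 'rV[F]_d) : Prop :=
  exists (u v : 'rV[F]_d), v != 0 /\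
    exists (a b c : F), x = u + a *: v /\ y = u + b *: v /\ z = u + c *: v.

Definition has_three_collinear (F : finFieldType) (d : nat) (E : {set 'rV[F]_d}) : Prop :=
  exists (x y z : 'rV[F]_d),
    [/\ x \in E, y \in E, z \in E,
        [/\ x != y, y != z & x != z] & collinear x y z].

From HB Require Import structures.
From mathcomp Require Import all_boot all_order all_algebra all_field.
From Stdlib Require Import Classical.

(* Fix x in E. If E has no three collinear points, the map (y, c) |-> c (y - x),
   for y in E \ x and c <> 0, is injective into the nonzero vectors, so
   (|E| - 1)(q - 1) <= q^d - 1, i.e. |E| <= N + 1 with N = (q^d - 1)/(q - 1).
   If |E| = N + 1 the map is onto, so for a fixed direction v every x in E has
   exactly one partner y in E with y - x parallel to v.  Pairing x with its
   partner is a fixed-point-free involution, so |E| is even; but N + 1 is odd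
   when q is odd and d is even. *)
Set Implicit Arguments. Unset Strict Implicit. Unset Printing Implicit Defensive.
Import GRing.Theory.
Local Open Scope ring_scope.

Lemma even_card_involution (T : finType) (A : {set T}) (f : T -> T) :
  {in A, forall x, f x \in A} -> {in A, involutive f} ->
  {in A, forall x, f x != x} -> ~~ odd #|A|.
Proof.
move=> fA fK fx_neq.
(* P keeps the element of smaller rank in each pair {x, f x}, so f maps
   A :&: P onto A :\: P. *)
pose P := [set x | (enum_rank x < enum_rank (f x))%N].
have rank_neq x : x \in A -> enum_rank x != enum_rank (f x).
  by move=> xA; apply: contra (fx_neq x xA) => /eqP/enum_rank_inj <-.
have fPc : A :\: P = f @: (A :&: P).
  apply/setP=> y; apply/idP/imsetP.
  - rewrite !inE => /andP[yP yA]; exists (f y); last by rewrite fK.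
    by rewrite !inE fA // fK // ltn_neqAle eq_sym rank_neq //= leqNgt.
  - case=> x; rewrite !inE => /andP[xP xA] ->.
    by rewrite fA // fK // andbT -leqNgt ltnW.
have f_inj : {in A :&: P &, injective f}.
  by move=> x y; rewrite !inE => /andP[xA _] /andP[yA _] fxy; rewrite -(fK x xA) fxy fK.
by rewrite -(cardsID P A) fPc (card_in_imset f_inj) addnn odd_double.
Qed.

Lemma geometric_sum_div (q d : nat) : (1 < q)%N ->
  ((q ^ d - 1) %/ (q - 1) = \sum_(i < d) q ^ i)%N.
Proof. by move=> q_gt1; rewrite !subn1 predn_exp mulKn // -ltnS prednK // ltnW. Qed.

Lemma odd_geometric_sum (q d : nat) : odd q -> odd (\sum_(i < d) q ^ i) = odd d.
Proof.
move=> q_odd; elim: d => [|d IHd]; first by rewrite big_ord0.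
by rewrite big_ord_recr /= oddD IHd oddX q_odd orbT addbT.
Qed.

Section NoThreeCollinear.

Variables (F : finFieldType) (d : nat) (E : {set 'rV[F]_d}).
Hypothesis noncollinear : ~ has_three_collinear E.

Lemma eq_on_line (x y z w : 'rV[F]_d) (b c : F) :
  x \in E -> y \in E -> z \in E -> y != x -> z != x -> w != 0 ->
  y - x = b *: w -> z - x = c *: w -> y = z.
Proof.
move=> xE yE zE yx zx w0 eyx ezx; apply/eqP; apply: contraT => yz; case: noncollinear.
exists x, y, z; split=> //; first by split; rewrite // eq_sym.
exists x, w; split=> //; exists 0, b, c.
by rewrite scale0r addr0 -eyx -ezx !(addrC x) !subrK.
Qed.

Definition scaled_diff (x : 'rV[F]_d) (p : 'rV[F]_d * F) := p.2 *: (p.1 - x).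

Definition diff_pairs (x : 'rV[F]_d) := setX (E :\ x) [set~ (0 : F)].

Lemma scaled_diff_inj x : x \in E -> {in diff_pairs x &, injective (scaled_diff x)}.
Proof.
move=> xE [y1 c1] [y2 c2]; rewrite !inE /scaled_diff /=.
case/andP=> /andP[y1x y1E] c1_neq0 /andP[/andP[y2x y2E] c2_neq0] e.
have y1x_neq0 : y1 - x != 0 by rewrite subr_eq0.
have ey1 : y1 - x = 1 *: (y1 - x) by rewrite scale1r.
have ey2 : y2 - x = (c1 / c2) *: (y1 - x).
  by rewrite mulrC -scalerA e scalerA mulVf // scale1r.
have y12 := eq_on_line xE y1E y2E y1x y2x y1x_neq0 ey1 ey2; subst y2.
congr (_, _); apply/eqP; move/eqP: e.
by rewrite -subr_eq0 -scalerBl scaler_eq0 (negbTE y1x_neq0) orbF subr_eq0.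
Qed.

Lemma scaled_diff_neq0 x : {in diff_pairs x, forall p, scaled_diff x p != 0}.
Proof.
move=> [y c]; rewrite !inE /scaled_diff /= => /andP[/andP[yx _] c_neq0].
by rewrite scaler_eq0 negb_or c_neq0 subr_eq0.
Qed.

Lemma card_scaled_diffs x : x \in E ->
  #|scaled_diff x @: diff_pairs x| = (#|E :\ x| * (#|F| - 1))%N.
Proof.
by move=> xE; rewrite (card_in_imset (scaled_diff_inj xE)) cardsX cardsC1 subn1.
Qed.

Lemma card_nonzero_rV : #|[set~ (0 : 'rV[F]_d)]| = (#|F| ^ d - 1)%N.
Proof. by rewrite cardsC1 card_mx mul1n subn1. Qed.

Lemma scaled_diffs_sub x : scaled_diff x @: diff_pairs x \subset [set~ 0].
Proof.
by apply/subsetP=> _ /imsetP[p p_in ->]; rewrite !inE scaled_diff_neq0.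
Qed.

Lemma card_le_geometric : (#|E| <= ((#|F| ^ d - 1) %/ (#|F| - 1)).+1)%N.
Proof.
have [->|[x xE]] := set_0Vmem E; first by rewrite cards0.
rewrite (cardsD1 x) xE ltnS leq_divRL ?subn_gt0 ?finNzRing_gt1 //.
rewrite -card_nonzero_rV -(card_scaled_diffs xE).
exact/subset_leq_card/scaled_diffs_sub.
Qed.

Lemma scaled_diffs_full x : x \in E ->
  #|E| = ((#|F| ^ d - 1) %/ (#|F| - 1)).+1 ->
  scaled_diff x @: diff_pairs x = [set~ 0].
Proof.
move=> xE; rewrite (cardsD1 x) xE add1n => -[card_Ex].
apply/eqP; rewrite eqEcard card_scaled_diffs // card_nonzero_rV card_Ex divnK.
  by rewrite leqnn andbT scaled_diffs_sub.
by rewrite !subn1 predn_exp dvdn_mulr.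
Qed.

Definition same_line (v x y : 'rV[F]_d) := [exists c : F, y - x == c *: v].

Lemma same_line_sym v x y : same_line v x y -> same_line v y x.
Proof.
by case/existsP=> c /eqP eyx; apply/existsP; exists (- c); rewrite scaleNr -eyx opprB.
Qed.

Section LinePartner.

Variable v : 'rV[F]_d.
Hypothesis v_neq0 : v != 0.
Hypothesis scaled_diffs_onto :
  forall x, x \in E -> scaled_diff x @: diff_pairs x = [set~ 0].

Definition line_partner x := odflt x [pick y in E :\ x | same_line v x y].

Lemma line_partnerP x : x \in E ->
  line_partner x \in E :\ x /\ same_line v x (line_partner x).
Proof.
move=> xE; rewrite /line_partner; case: pickP => [y /andP[] //|no_partner].
have : v \in scaled_diff x @: diff_pairs x by rewrite scaled_diffs_onto // !inE.
case/imsetP=> -[y c]; rewrite !inE /scaled_diff /= => /andP[yEx c_neq0] ev.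
have /negbT/negP[] := no_partner y; rewrite !inE yEx /=.
by apply/existsP; exists c^-1; rewrite ev scalerA mulVf ?scale1r.
Qed.

Lemma line_partnerK : {in E, involutive line_partner}.
Proof.
move=> x xE; have [] := line_partnerP xE; rewrite !inE => /andP[yx yE] xy.
have [] := line_partnerP yE; rewrite !inE => /andP[zy zE] /existsP[c /eqP ezy].
have /existsP[b /eqP exy] := same_line_sym xy.
by apply: (eq_on_line yE zE xE zy _ v_neq0 ezy exy); rewrite eq_sym.
Qed.

Lemma even_card_line_partner : ~~ odd #|E|.
Proof.
by apply: (even_card_involution _ line_partnerK) => x /line_partnerP[];
  rewrite !inE => /andP[].
Qed.

End LinePartner.

Lemma even_card_max (d_gt0 : (0 < d)%N) :
  #|E| = ((#|F| ^ d - 1) %/ (#|F| - 1)).+1 -> ~~ odd #|E|.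
Proof.
move=> card_E.
have e_neq0 : delta_mx 0 (Ordinal d_gt0) != 0 :> 'rV[F]_d.
  apply/eqP => /matrixP/(_ 0 (Ordinal d_gt0)).
  by rewrite !mxE !eqxx => /eqP; rewrite oner_eq0.
exact: (even_card_line_partner e_neq0) (fun x xE => scaled_diffs_full xE card_E).
Qed.
End NoThreeCollinear.

Theorem mainTheorem11 (F : finFieldType) (d : nat) (E : {set 'rV[F]_d}) :
  odd #|F| -> (1 <= d)%N ->
  (((#|F| ^ d - 1) %/ (#|F| - 1)).+1 < #|E| -> has_three_collinear E)%N /\
  (~~ odd d -> (#|F| ^ d - 1) %/ (#|F| - 1) < #|E| -> has_three_collinear E)%N.
Proof.
move=> F_odd d_gt0; have q_gt1 := finNzRing_gt1 F.
split=> [|d_even] E_big; apply: NNPP => noncollinear.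
  by have := card_le_geometric noncollinear; rewrite leqNgt E_big.
have card_E : #|E| = ((#|F| ^ d - 1) %/ (#|F| - 1)).+1.
  by apply/eqP; rewrite eqn_leq card_le_geometric.
have := even_card_max noncollinear d_gt0 card_E.
by rewrite card_E /= geometric_sum_div // odd_geometric_sum // (negbTE d_even).
Qed.
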